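(* Let $\mathbf G=(G,\tau)$ be a real linear algebraic group, write ${}^\gamma g=\tau(g)$, and let $\mathbf Y$ be a right homogeneous space of $\mathbf G$ with complex points $Y$ carrying a compatible complex conjugation $y\mapsto {}^\gamma y$ (i.e. ${}^\gamma(y\cdot g)={}^\gamma y\cdot{}^\gamma g$). Fix $y_0\in Y$, let $H=\mathrm{Stab}_G(y_0)$, and let $g_{y_0}\in G$ satisfy ${}^\gamma y_0=y_0\cdot g_{y_0}$. Let $z\in Hg_{y_0}$ satisfy $z\cdot{}^\gamma z=1$. Then $\varphi_z\colon g\mapsto z\,{}^\gamma g\,z^{-1}$ is an anti-regular involution of $G$ with $\varphi_z(H)=H$; put ${}_z\mathbf G=(G,\varphi_z)$ and ${}_z\mathbf H=(H,\varphi_z|_H)$. Consider the composite map $$H^1({}_z\mathbf H)\to H^1({}_z\mathbf G)\to H^1\mathbf G,\qquad [h]\mapsto[h]\mapsto[hz].$$ Then there exists $z'\in Hg_{y_0}\cap B^1\mathbf G$ if and only if the image of this composite map contains the neutral class $[1]\in H^1\mathbf G$.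
   Context: For a real group $(G,\tau)$: $Z^1=\{z\in G: z\tau(z)=1\}$, $B^1=\{g^{-1}\tau(g): g\in G\}$, $z\sim b^{-1}z\tau(b)$, $H^1=Z^1/\sim$ with neutral class $[1]$. Anti-regular maps: $\varphi$ such that $x\mapsto\overline{f(\varphi(x))}$ is regular for each regular function $f$. *)

(* linear algebraic groups as Zariski-closed subgroups of
   GL_n(C), C an algebraically closed field with conjugation
   (numClosedFieldType, e.g. the complex numbers). *)
From HB Require Import structures.
From mathcomp Require Import all_boot all_order all_algebra.
From mathcomp Require Import mpoly.
Set Implicit Arguments. Unset Strict Implicit. Unset Printing Implicit Defensive.
Import Order.TTheory GRing.Theory Num.Theory.
Local Open Scope ring_scope.

Section Defs.
Variables (C : numClosedFieldType) (n : nat).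
Notation M := 'M[C]_n.

Definition coords (g : M) : 'I_(n * n) -> C := fun i => mxvec g 0 i.

Definition lin_alg_group (G : M -> Prop) : Prop :=
  [/\ G 1%:M,
      (forall g h, G g -> G h -> G (g *m h)),
      (forall g, G g -> g \in unitmx),
      (forall g, G g -> G (invmx g)) &
      (forall x, x \in unitmx ->
         (forall p : {mpoly C[n * n]},
            (forall g, G g -> p.@[coords g] = 0) -> p.@[coords x] = 0) ->
         G x)].

(* regular functions on G: restrictions of elements of C[x_ij, 1/det] *)
Definition regular_on (G : M -> Prop) (f : M -> C) : Prop :=
  exists (p : {mpoly C[n * n]}) (k : nat),
    forall g, G g -> f g = p.@[coords g] / (\det g) ^+ k.

Definition anti_regular (G : M -> Prop) (phi : M -> M) : Prop :=
  (forall g, G g -> G (phi g)) /\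
  (forall f, regular_on G f -> regular_on G (fun x => (f (phi x))^*)).

Definition real_structure (G : M -> Prop) (tau : M -> M) : Prop :=
  [/\ anti_regular G tau,
      (forall g h, G g -> G h -> tau (g *m h) = tau g *m tau h) &
      (forall g, G g -> tau (tau g) = g)].

Definition Z1 (G : M -> Prop) (tau : M -> M) (z : M) : Prop :=
  G z /\ z *m tau z = 1%:M.

Definition B1 (G : M -> Prop) (tau : M -> M) (z : M) : Prop :=
  exists g, G g /\ z = invmx g *m tau g.

Definition cohomologous (G : M -> Prop) (tau : M -> M) (z w : M) : Prop :=
  exists b, G b /\ w = invmx b *m z *m tau b.

Definition H1class (G : M -> Prop) (tau : M -> M) (z : M) : M -> Prop :=
  fun w => Z1 G tau w /\ cohomologous G tau z w.

Definition twist (tau : M -> M) (z : M) : M -> M :=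
  fun g => z *m tau g *m invmx z.

End Defs.

(* If z is a cocycle then (h z) tau(h z) = h phi_z(h), so h z is a tau-cocycle
   exactly when h is a phi_z-cocycle, and [h z] is the neutral class of H^1 G
   exactly when h z is a coboundary.  As z lies in H g_y0, the coset H g_y0 is
   H z, hence both sides of the equivalence say that h z is a coboundary for
   some h in H.  Since ^gamma y0 = y0 z, the stabilizer H is phi_z-stable, and
   phi_z is anti-regular because conjugation by a fixed matrix acts
   polynomially on the matrix entries. *)

From HB Require Import structures.
From mathcomp Require Import all_boot all_order all_algebra.
From mathcomp Require Import mpoly.
Set Implicit Arguments. Unset Strict Implicit. Unset Printing Implicit Defensive.
Import Order.TTheory GRing.Theory Num.Theory.
Local Open Scope ring_scope.

Section RegularConjugation.
Variables (C : numClosedFieldType) (n : nat).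
Notation M := 'M[C]_n.
Notation mpoly := {mpoly C[n * n]}.

Definition generic_mx : 'M[mpoly]_n := \matrix_(i, j) 'X_(mxvec_index i j).

Lemma meval_generic_mx (y : M) : map_mx (meval (coords y)) generic_mx = y.
Proof. by apply/matrixP=> i j; rewrite !mxE mevalXU /coords mxvecE. Qed.

Lemma meval_const_mx (v : 'I_(n * n) -> C) (a : M) :
  map_mx (meval v) (map_mx (@mpolyC _ C) a) = a.
Proof. by rewrite -map_mx_comp map_mx_id // => c /=; rewrite mevalC. Qed.

Lemma meval_coords_mulmx (a b : M) (p : mpoly) :
  exists q : mpoly, forall y, p.@[coords (a *m y *m b)] = q.@[coords y].
Proof.
pose ab := mxvec (map_mx (@mpolyC _ C) a *m generic_mx *m map_mx (@mpolyC _ C) b).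
exists (p \mPo [tuple ab 0 k | k < n * n]) => y.
rewrite comp_mpoly_meval; apply: meval_eq => k; rewrite tnth_mktuple.
have -> : (ab 0 k).@[coords y] = map_mx (meval (coords y)) ab 0 k by rewrite mxE.
by rewrite /ab map_mxvec !map_mxM meval_generic_mx !meval_const_mx.
Qed.

Lemma regular_on_conjmx (G : M -> Prop) (a : M) (f : M -> C) :
  a \in unitmx -> (forall g, G g -> G (a *m g *m invmx a)) ->
  regular_on G f -> regular_on G (fun g => f (a *m g *m invmx a)).
Proof.
move=> aU Ga [p [k fE]]; have [q pE] := meval_coords_mulmx a (invmx a) p.
exists q, k => g Gg; rewrite fE ?pE; last exact: Ga.
by rewrite !det_mulmx det_inv mulrAC mulrV ?mul1r // -unitmxE.
Qed.

End RegularConjugation.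

Section MatrixGroups.
Variables (C : numClosedFieldType) (n : nat).
Notation M := 'M[C]_n.

Definition matrix_group (G : M -> Prop) : Prop :=
  [/\ G 1%:M, (forall g h, G g -> G h -> G (g *m h)),
      (forall g, G g -> g \in unitmx) & (forall g, G g -> G (invmx g))].

Definition group_involution (G : M -> Prop) (tau : M -> M) : Prop :=
  [/\ (forall g, G g -> G (tau g)),
      (forall g h, G g -> G h -> tau (g *m h) = tau g *m tau h) &
      (forall g, G g -> tau (tau g) = g)].

Lemma lin_alg_group_matrix_group G : lin_alg_group G -> matrix_group G.
Proof. by case. Qed.

Lemma real_structure_group_involution G tau :
  real_structure G tau -> group_involution G tau.
Proof. by case=> -[]. Qed.

Variables (G : M -> Prop) (tau : M -> M).

Lemma mgroup1 : matrix_group G -> G 1%:M.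
Proof. by case. Qed.

Lemma mgroupM : matrix_group G -> forall g h, G g -> G h -> G (g *m h).
Proof. by case. Qed.

Lemma mgroup_unit : matrix_group G -> forall g, G g -> g \in unitmx.
Proof. by case. Qed.

Lemma mgroupV : matrix_group G -> forall g, G g -> G (invmx g).
Proof. by case. Qed.

Lemma involution_in : group_involution G tau -> forall g, G g -> G (tau g).
Proof. by case. Qed.

Lemma involutionM : group_involution G tau ->
  forall g h, G g -> G h -> tau (g *m h) = tau g *m tau h.
Proof. by case. Qed.

Lemma involutionK : group_involution G tau -> forall g, G g -> tau (tau g) = g.
Proof. by case. Qed.

End MatrixGroups.

Lemma mulmx_invmx_uniq (C : numClosedFieldType) (n : nat) (a b : 'M[C]_n) :
  a \in unitmx -> a *m b = 1%:M -> b = invmx a.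
Proof. by move=> aU ab; rewrite -[b]mul1mx -(mulVmx aU) -mulmxA ab mulmx1. Qed.

Section RealGroup.
Variables (C : numClosedFieldType) (n : nat).
Notation M := 'M[C]_n.
Variables (G : M -> Prop) (tau : M -> M).
Hypotheses (groupG : matrix_group G) (tau_inv : group_involution G tau).

Let G1 := mgroup1 groupG.
Let GM := mgroupM groupG.
Let GU := mgroup_unit groupG.
Let GV := mgroupV groupG.
Let Gtau := involution_in tau_inv.
Let tauM := involutionM tau_inv.
Let tauK := involutionK tau_inv.

Lemma involution1 : tau 1%:M = 1%:M.
Proof.
have tau1U : tau 1%:M \in unitmx by exact/GU/Gtau.
have idem : tau 1%:M *m tau 1%:M = tau 1%:M by rewrite -tauM // mulmx1.
by rewrite -[RHS](mulVmx tau1U) -{3}idem mulmxA mulVmx // mul1mx.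
Qed.

Lemma involutionV g : G g -> tau (invmx g) = invmx (tau g).
Proof.
move=> Gg; apply: mulmx_invmx_uniq; first exact/GU/Gtau.
by rewrite -tauM ?mulmxV ?involution1 //; [exact: GU | exact: GV].
Qed.

Lemma B1_Z1 w : B1 G tau w -> Z1 G tau w.
Proof.
case=> g [Gg ->]; split; first by apply: GM; [exact: GV | exact: Gtau].
have tgU : tau g \in unitmx by exact/GU/Gtau.
rewrite tauM ?involutionV ?tauK //; [|exact: GV|exact: Gtau].
by rewrite !mulmxA mulmxK // mulVmx //; exact: GU.
Qed.

Lemma H1class_neutral w : H1class G tau w 1%:M <-> B1 G tau w.
Proof.
split=> [[_ [b [Gb wE]]] | [g [Gg ->]]].
- exists (invmx b); split; first exact: GV.
  have [bU tbU] : b \in unitmx /\ tau b \in unitmx by split; [exact: GU | exact/GU/Gtau].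
  rewrite involutionV // invmxK.
  transitivity (b *m 1%:M *m invmx (tau b)); last by rewrite mulmx1.
  by rewrite wE !mulmxA mulmxV // mul1mx mulmxK.
- split; first by split; rewrite ?involution1 ?mulmx1.
  exists (invmx g); split; first exact: GV.
  have [gU tgU] : g \in unitmx /\ tau g \in unitmx by split; [exact: GU | exact/GU/Gtau].
  by rewrite involutionV // invmxK !mulmxA mulmxV // mul1mx mulmxV.
Qed.

Section Twist.
Variable z : M.
Hypothesis z_cocycle : Z1 G tau z.

Let Gz : G z. Proof. by case: z_cocycle. Qed.
Let zU : z \in unitmx. Proof. exact: GU. Qed.

Lemma cocycle_tau : tau z = invmx z.
Proof. by apply: mulmx_invmx_uniq => //; case: z_cocycle. Qed.

Lemma twist_in g : G g -> G (twist tau z g).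
Proof. by move=> Gg; apply: GM; [apply: GM => //; exact: Gtau | exact: GV]. Qed.

Lemma twistM g h : G g -> G h ->
  twist tau z (g *m h) = twist tau z g *m twist tau z h.
Proof. by move=> Gg Gh; rewrite /twist tauM // !mulmxA mulmxKV. Qed.

Lemma twistK g : G g -> twist tau z (twist tau z g) = g.
Proof.
move=> Gg; have Gtg := Gtau Gg.
rewrite /twist tauM ?tauM ?tauK ?involutionV ?cocycle_tau ?invmxK //; last 2 first.
- exact: GM.
- exact: GV.
by rewrite !mulmxA mulmxV // mul1mx mulmxK.
Qed.

Lemma real_structure_twist : anti_regular G tau -> real_structure G (twist tau z).
Proof.
case=> _ tau_reg; split; [split | exact: twistM | exact: twistK].
  exact: twist_in.
move=> f f_reg; apply: (tau_reg _ (regular_on_conjmx zU _ f_reg)) => g Gg.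
by apply: GM; [exact: GM | exact: GV].
Qed.

Lemma mulmx_cocycle_twist h : G h -> h *m z *m tau (h *m z) = h *m twist tau z h.
Proof. by move=> Gh; rewrite tauM // cocycle_tau /twist !mulmxA. Qed.

Lemma B1_coset_twist_iff (H : M -> Prop) : (forall h, H h -> G h) ->
  (exists z', (exists h, H h /\ z' = h *m z) /\ B1 G tau z') <->
  (exists h, Z1 H (twist tau z) h /\ H1class G tau (h *m z) 1%:M).
Proof.
move=> HG; split=> [[_ [[h [Hh ->]] Bhz]] | [h [[Hh _] /H1class_neutral Bhz]]].
  exists h; split; last exact/H1class_neutral.
  split=> //; rewrite -mulmx_cocycle_twist; [by case: (B1_Z1 Bhz) | exact: HG].
by exists (h *m z); split=> //; exists h.
Qed.

End Twist.

End RealGroup.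

Section HomogeneousSpace.
Variables (C : numClosedFieldType) (n : nat).
Notation M := 'M[C]_n.
Variables (G : M -> Prop) (tau : M -> M) (Y : Type) (act : Y -> M -> Y) (cY : Y -> Y).
Variable y0 : Y.
Hypotheses (groupG : matrix_group G) (tau_inv : group_involution G tau).
Hypotheses (act1 : forall y, act y 1%:M = y)
  (actM : forall y g h, G g -> G h -> act y (g *m h) = act (act y g) h).
Hypotheses (cYK : involutive cY) (cY_act : forall y g, G g -> cY (act y g) = act (cY y) (tau g)).

Let GM := mgroupM groupG.
Let GU := mgroup_unit groupG.
Let GV := mgroupV groupG.

Definition stabilizer (g : M) : Prop := G g /\ act y0 g = y0.

Lemma stabilizerM g h : stabilizer g -> stabilizer h -> stabilizer (g *m h).
Proof. by case=> Gg gy0 [Gh hy0]; split; [exact: GM | rewrite actM // gy0]. Qed.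

Lemma stabilizerV g : stabilizer g -> stabilizer (invmx g).
Proof.
case=> Gg gy0; have [gU Gvg] := (GU Gg, GV Gg); split=> //.
by rewrite -[in LHS]gy0 -actM // mulmxV // act1.
Qed.

Lemma stabilizer_coset (h0 x0 x : M) : stabilizer h0 ->
  (exists h, stabilizer h /\ x = h *m x0) <->
  (exists h, stabilizer h /\ x = h *m (h0 *m x0)).
Proof.
move=> Sh0; have h0U : h0 \in unitmx by apply: GU; case: Sh0.
split=> -[h [Sh ->]].
  exists (h *m invmx h0); split; first by apply: stabilizerM => //; exact: stabilizerV.
  by rewrite !mulmxA mulmxKV.
by exists (h *m h0); split; [exact: stabilizerM | rewrite mulmxA].
Qed.

Section TwistStabilizer.
Variable z : M.
Hypotheses (z_cocycle : Z1 G tau z) (zy0 : act y0 z = cY y0).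

Let Gz : G z. Proof. by case: z_cocycle. Qed.

Lemma act_twist g : G g -> act y0 (twist tau z g) = act (cY (act y0 g)) (invmx z).
Proof.
move=> Gg; have [Gtg Gvz] := (involution_in tau_inv Gg, GV Gz).
by rewrite /twist actM ?(actM _ Gz Gtg) ?zy0 ?cY_act //; exact: GM.
Qed.

Lemma stabilizer_twist g : G g -> stabilizer (twist tau z g) <-> stabilizer g.
Proof.
move=> Gg; have [zU Gvz] := (GU Gz, GV Gz).
rewrite /stabilizer act_twist //; split=> -[_ gy0]; split=> //.
- by apply: (can_inj cYK); rewrite -zy0 -[in RHS]gy0 -actM // mulVmx // act1.
- exact: twist_in.
- by rewrite gy0 -zy0 -actM // mulmxV // act1.
Qed.

End TwistStabilizer.

End HomogeneousSpace.

Theorem proposition3p2 (C : numClosedFieldType) (n : nat)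
  (G : 'M[C]_n -> Prop) (tau : 'M[C]_n -> 'M[C]_n)
  (Y : Type) (act : Y -> 'M[C]_n -> Y) (cY : Y -> Y)
  (y0 : Y) (gy0 z : 'M[C]_n) :
  lin_alg_group G ->
  real_structure G tau ->
  (* Y is a right homogeneous space of G *)
  (forall y, act y 1%:M = y) ->
  (forall y g h, G g -> G h -> act y (g *m h) = act (act y g) h) ->
  (forall y y', exists g, G g /\ act y g = y') ->
  (* compatible complex conjugation on Y *)
  (forall y, cY (cY y) = y) ->
  (forall y g, G g -> cY (act y g) = act (cY y) (tau g)) ->
  G gy0 -> cY y0 = act y0 gy0 ->
  let H := fun g => G g /\ act y0 g = y0 in
  let HgY := fun x => exists h, H h /\ x = h *m gy0 in
  HgY z -> z *m tau z = 1%:M ->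
  let phi := twist tau z in
  [/\ real_structure G phi,
      (forall g, G g -> (H (phi g) <-> H g)) &
      ((exists z', HgY z' /\ B1 G tau z') <->
       (exists h, Z1 H phi h /\ H1class G tau (h *m z) 1%:M))].
Proof.
move=> Galg tau_real act1 actM _ cYK cY_act Ggy0 cy0 H HgY [h0 [[Gh0 h0y0] zE]] zz phi.
have groupG := lin_alg_group_matrix_group Galg.
have tau_inv := real_structure_group_involution tau_real.
have z_cocycle : Z1 G tau z by split; rewrite // zE; exact: mgroupM.
have zy0 : act y0 z = cY y0 by rewrite zE actM // h0y0.
have HgY_coset x : HgY x <-> exists h, H h /\ x = h *m z.
  by rewrite zE; exact: (stabilizer_coset groupG act1 actM).
split.
- by apply: real_structure_twist => //; case: tau_real.
- exact: (stabilizer_twist groupG tau_inv act1 actM cYK cY_act z_cocycle zy0).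
- rewrite -B1_coset_twist_iff //; last by move=> h [].
  by split=> -[z' [/HgY_coset Sz' Bz']]; exists z'.
Qed.
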